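(* Let $\sum_{n=1}^{\infty}x_n$ be a divergent series of positive real terms with $\lim_{n\to\infty}x_n=0$. Then for every $x\geq 0$ there exists a permutation $\sigma$ of $\mathbb{N}$ such that the series $\sum_{n=1}^{\infty}(x_n-x_{\sigma(n)})$ converges and $\sum_{n=1}^{\infty}(x_n-x_{\sigma(n)})=x$.
   Context: $S_\infty$ denotes the set of all permutations (bijections) of $\mathbb{N}$. *)

From Stdlib Require Import Reals.
Open Scope R_scope.

Definition is_perm (s : nat -> nat) : Prop :=
  (forall m n, s m = s n -> m = n) /\ (forall k, exists n, s n = k).

From Stdlib Require Import Reals Lra Lia ClassicalEpsilon Classical.
Open Scope R_scope.

(* The permutation is an involution built greedily.  Scanning n = 0, 1, 2, ..., keep the
   weight W of the indices opened so far but not yet closed.  If W < c, open n.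
   Otherwise, if x n <= 2^-k where k is the number of closings so far, let n close the
   oldest open index o, so that σ swaps o and n and W drops by x o; every other n is a
   fixed point.  A partial sum of x n - x (σ n) telescopes to the sum of x o - x (σ o) over
   the currently open o, i.e. W minus the weight of partners still to come, which is at
   most 2^(1-k).  Divergence of the series makes W climb back above c infinitely often,
   hence k -> oo, and x n -> 0 makes the oscillation of W around c vanish.  For c = 0 the
   identity works; c > 0 guarantees that a closing step always finds an open index. *)

Fixpoint sum_range (f : nat -> R) (a l : nat) : R :=
  match l with O => 0 | S l' => f a + sum_range f (S a) l' end.

Lemma sum_range_S f a l : sum_range f a (S l) = sum_range f a l + f (a + l)%nat.
Proof.
  revert a; induction l as [|l IH]; intro a; cbn [sum_range].
  - rewrite Nat.add_0_r; ring.
  - rewrite <- Nat.add_succ_comm. cbn [sum_range] in IH. rewrite IH; ring.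
Qed.

Lemma sum_range_add f a l m :
  sum_range f a (l + m) = sum_range f a l + sum_range f (a + l) m.
Proof.
  revert a; induction l as [|l IH]; intro a; cbn [sum_range plus].
  - rewrite Nat.add_0_r; ring.
  - rewrite IH, Nat.add_succ_comm; ring.
Qed.

Lemma sum_range_minus f g a l :
  sum_range (fun k => f k - g k) a l = sum_range f a l - sum_range g a l.
Proof. revert a; induction l as [|l IH]; intro a; cbn; [ring|rewrite IH; ring]. Qed.

Lemma sum_range_le f g a l : (forall i, f i <= g i) -> sum_range f a l <= sum_range g a l.
Proof.
  intro H; revert a; induction l as [|l IH]; intro a; cbn; [lra|].
  specialize (H a); specialize (IH (S a)); lra.
Qed.

Lemma sum_range_nonneg f a l : (forall i, 0 <= f i) -> 0 <= sum_range f a l.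
Proof.
  intro H. replace 0 with (sum_range (fun _ => 0) a l) by (revert a; induction l; cbn; auto; intro; rewrite IHl; ring).
  now apply sum_range_le.
Qed.

Lemma sum_range_sum_f_R0 f N : sum_range f 0 (S N) = sum_f_R0 f N.
Proof. induction N as [|N IH]; [cbn; ring|rewrite sum_range_S, IH; reflexivity]. Qed.

Lemma pow_half_pos k : 0 < (1/2)^k.
Proof. apply pow_lt; lra. Qed.

Lemma pow_half_antimono a b : (a <= b)%nat -> (1/2)^b <= (1/2)^a.
Proof.
  intro H. induction H as [|b _ IH]; [lra|].
  cbn [pow]. pose proof (pow_half_pos b). lra.
Qed.

Lemma sum_range_pow_half a l : sum_range (fun k => (1/2)^k) a l <= 2 * (1/2)^a.
Proof.
  revert a; induction l as [|l IH]; intro a; cbn [sum_range].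
  - pose proof (pow_half_pos a); lra.
  - specialize (IH (S a)). cbn [pow] in IH. lra.
Qed.

Lemma involution_is_perm (s : nat -> nat) : (forall n, s (s n) = n) -> is_perm s.
Proof.
  intro invol; split.
  - intros m n e. now rewrite <- (invol m), <- (invol n), e.
  - intro k. exists (s k). apply invol.
Qed.

Section GreedyInvolution.

Variable x : nat -> R.
Variable c : R.

Record state := mkState
  { st_opened : nat; st_closed : nat; st_queue : nat -> nat; st_weight : R }.

Definition step (n : nat) (s : state) : state :=
  if Rlt_dec (st_weight s) c then
    mkState (S (st_opened s)) (st_closed s)
      (fun k => if Nat.eqb k (st_opened s) then n else st_queue s k)
      (st_weight s + x n)
  else if Rle_dec (x n) ((1/2)^(st_closed s)) then
    mkState (st_opened s) (S (st_closed s)) (st_queue s)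
      (st_weight s - x (st_queue s (st_closed s)))
  else s.

Fixpoint state_at (n : nat) : state :=
  match n with
  | O => mkState 0 0 (fun _ => 0%nat) 0
  | S n => step n (state_at n)
  end.

Definition opened n := st_opened (state_at n).
Definition closed n := st_closed (state_at n).
Definition queue n := st_queue (state_at n).
Definition weight n := st_weight (state_at n).

Definition opens n := weight n < c.
Definition closes n := c <= weight n /\ x n <= (1/2)^(closed n).

Variant step_spec (n : nat) : Prop :=
  | StepOpen : opens n ->
      opened (S n) = S (opened n) -> closed (S n) = closed n ->
      queue (S n) = (fun k => if Nat.eqb k (opened n) then n else queue n k) ->
      weight (S n) = weight n + x n -> step_spec n
  | StepClose : closes n ->
      opened (S n) = opened n -> closed (S n) = S (closed n) ->
      queue (S n) = queue n ->
      weight (S n) = weight n - x (queue n (closed n)) -> step_spec n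
  | StepSkip : c <= weight n -> (1/2)^(closed n) < x n ->
      opened (S n) = opened n -> closed (S n) = closed n ->
      queue (S n) = queue n -> weight (S n) = weight n -> step_spec n.

Lemma stepP n : step_spec n.
Proof.
  unfold opens, closes.
  destruct (Rlt_dec (weight n) c) as [Hlt|Hge].
  - apply StepOpen; auto; unfold opened, closed, queue, weight in *; cbn [state_at];
      unfold step; now destruct (Rlt_dec _ c).
  - destruct (Rle_dec (x n) ((1/2)^(closed n))) as [Hle|Hgt].
    + apply StepClose; [split; lra|..];
        unfold opened, closed, queue, weight in *; cbn [state_at]; unfold step;
        (destruct (Rlt_dec _ c); [contradiction|]); now destruct (Rle_dec _ _).
    + apply StepSkip; [lra|lra|..];
        unfold opened, closed, queue, weight in *; cbn [state_at]; unfold step;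
        (destruct (Rlt_dec _ c); [contradiction|]); now destruct (Rle_dec _ _).
Qed.

Lemma opened_S n : opens n -> opened (S n) = S (opened n).
Proof. intro Ho. destruct (stepP n); auto; unfold opens, closes in *; lra. Qed.

Lemma closed_S n : closes n -> closed (S n) = S (closed n).
Proof. intro Hc. destruct (stepP n); auto; unfold opens, closes in *; lra. Qed.

Lemma opened_mono n m : (n <= m)%nat -> (opened n <= opened m)%nat.
Proof. induction 1 as [|m _ IH]; [lia|destruct (stepP m); lia]. Qed.

Lemma closed_mono n m : (n <= m)%nat -> (closed n <= closed m)%nat.
Proof. induction 1 as [|m _ IH]; [lia|destruct (stepP m); lia]. Qed.

Lemma opened_le n : (opened n <= n)%nat.
Proof. induction n as [|n IH]; [reflexivity|destruct (stepP n); lia]. Qed.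

Lemma opens_inj n m : opens n -> opens m -> opened n = opened m -> n = m.
Proof.
  enough (H : forall n m, opens n -> (n < m)%nat -> (opened n < opened m)%nat)
    by (intros Hn Hm e; destruct (Nat.lt_trichotomy n m) as [h|[h|h]];
        [specialize (H n m Hn h)|auto|specialize (H m n Hm h)]; lia).
  intros p q Hp Hpq. rewrite <- Nat.le_succ_l, <- opened_S by exact Hp.
  now apply opened_mono.
Qed.

Lemma closes_inj n m : closes n -> closes m -> closed n = closed m -> n = m.
Proof.
  enough (H : forall n m, closes n -> (n < m)%nat -> (closed n < closed m)%nat)
    by (intros Hn Hm e; destruct (Nat.lt_trichotomy n m) as [h|[h|h]];
        [specialize (H n m Hn h)|auto|specialize (H m n Hm h)]; lia).
  intros p q Hp Hpq. rewrite <- Nat.le_succ_l, <- closed_S by exact Hp.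
  now apply closed_mono.
Qed.

Lemma queue_spec n k : (k < opened n)%nat -> opens (queue n k) /\ opened (queue n k) = k.
Proof.
  revert k; induction n as [|n IH]; intros k Hk; [cbn in Hk; lia|].
  destruct (stepP n) as [Ho Hop _ Hq _|_ Hop _ Hq _|_ _ Hop _ Hq _];
    rewrite Hq; rewrite Hop in Hk; auto.
  destruct (Nat.eqb_spec k (opened n)) as [->|Hne]; auto. apply IH; lia.
Qed.

Lemma closes_exists n k : (k < closed n)%nat -> exists m, closes m /\ closed m = k.
Proof.
  induction n as [|n IH]; intro Hk; [cbn in Hk; lia|].
  destruct (stepP n) as [_ _ Hcl _ _|Hc _ Hcl _ _|_ _ _ Hcl _ _]; rewrite Hcl in Hk; auto.
  destruct (Nat.eq_dec k (closed n)) as [->|Hne]; [eauto|apply IH; lia].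
Qed.

Definition opener k := epsilon (inhabits 0%nat) (fun m => opens m /\ opened m = k).
Definition closer k := epsilon (inhabits 0%nat) (fun m => closes m /\ closed m = k).

Lemma opener_spec n k : (k < opened n)%nat -> opens (opener k) /\ opened (opener k) = k.
Proof.
  intro Hk. apply (epsilon_spec (inhabits 0%nat) (fun m => opens m /\ opened m = k)).
  exists (queue n k). now apply queue_spec.
Qed.

Lemma queue_opener n k : (k < opened n)%nat -> queue n k = opener k.
Proof.
  intro Hk. destruct (queue_spec n k Hk), (opener_spec n k Hk).
  apply opens_inj; auto; congruence.
Qed.

Lemma opener_opened n : opens n -> opener (opened n) = n.
Proof.
  intro Ho. assert (Hk : (opened n < opened (S n))%nat) by (rewrite opened_S; auto).
  destruct (opener_spec _ _ Hk). apply opens_inj; auto.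
Qed.

Lemma opener_ge n k : (k < opened n)%nat -> (k <= opener k)%nat.
Proof.
  intro Hk. destruct (opener_spec n k Hk) as [_ e]. pose proof (opened_le (opener k)). lia.
Qed.

Definition sigma n :=
  if Rlt_dec (weight n) c then closer (opened n)
  else if Rle_dec (x n) ((1/2)^(closed n)) then opener (closed n) else n.

Hypothesis x_pos : forall n, 0 < x n.
Hypothesis c_pos : 0 < c.

Lemma weight_sum n : (closed n <= opened n)%nat /\
  weight n = sum_range (fun k => x (opener k)) (closed n) (opened n - closed n).
Proof.
  induction n as [|n [Hle IH]]; [cbn; split; auto|].
  destruct (stepP n) as [Ho Hop Hcl _ Hw|[Hc _] Hop Hcl _ Hw|_ _ Hop Hcl _ Hw];
    rewrite Hop, Hcl, Hw.
  - split; [lia|]. replace (S (opened n) - closed n)%nat with (S (opened n - closed n)) by lia.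
    rewrite sum_range_S, IH. replace (closed n + _)%nat with (opened n) by lia.
    now rewrite opener_opened.
  - assert (Hlt : (closed n < opened n)%nat).
    { destruct (Nat.eq_dec (closed n) (opened n)) as [e|]; [|lia].
      rewrite e, Nat.sub_diag in IH. cbn in IH. lra. }
    split; [lia|]. rewrite IH, (queue_opener n) by exact Hlt.
    replace (opened n - closed n)%nat with (S (opened n - S (closed n))) by lia.
    cbn [sum_range]. ring.
  - auto.
Qed.

Lemma weight_nonneg n : 0 <= weight n.
Proof.
  rewrite (proj2 (weight_sum n)). apply sum_range_nonneg. intro; left; auto.
Qed.

Lemma closes_closed_lt n : closes n -> (closed n < opened n)%nat.
Proof.
  intros [Hc _]. destruct (weight_sum n) as [Hle Hw].
  destruct (Nat.eq_dec (closed n) (opened n)) as [e|]; [|lia].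
  rewrite e, Nat.sub_diag in Hw. cbn in Hw. lra.
Qed.

Hypothesis x_cv0 : Un_cv x 0.
Hypothesis x_diverges : ~ exists l : R, Un_cv (fun N => sum_f_R0 x N) l.

Lemma x_eventually_lt e : 0 < e -> exists N, forall n, (N <= n)%nat -> x n < e.
Proof.
  intro He. destruct (x_cv0 e He) as [N HN]. exists N. intros n Hn.
  specialize (HN n Hn). unfold Rdist in HN.
  rewrite Rminus_0_r, Rabs_right in HN; [exact HN|left; apply x_pos].
Qed.

Lemma partial_sums_unbounded K : exists N, K < sum_range x 0 N.
Proof.
  apply NNPP; intro Hbd. apply x_diverges.
  assert (Hgrow : Un_growing (fun N => sum_f_R0 x N))
    by (intro n; cbn; pose proof (x_pos (S n)); lra).
  assert (Hub : has_ub (fun N => sum_f_R0 x N)).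
  { exists K. intros r [N ->]. rewrite <- sum_range_sum_f_R0.
    apply Rnot_lt_le. intro; apply Hbd; eauto. }
  destruct (growing_cv _ Hgrow Hub) as [l Hl]. eauto.
Qed.

Lemma weight_ge_infinitely_often m : exists n, (m <= n)%nat /\ c <= weight n.
Proof.
  apply NNPP; intro Hnot.
  assert (Hlt : forall n, (m <= n)%nat -> opens n)
    by (intros n Hn; apply Rnot_le_lt; intro; apply Hnot; eauto).
  assert (Hw : forall j, weight (m + j) = weight m + sum_range x m j).
  { induction j as [|j IH]; [rewrite Nat.add_0_r; cbn; ring|].
    rewrite Nat.add_succ_r, sum_range_S.
    destruct (stepP (m + j)) as [_ _ _ _ ->|[Hc _] _ _ _ _|Hc _ _ _ _ _];
      pose proof (Hlt (m + j)%nat ltac:(lia)); unfold opens in *; lra. }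
  destruct (partial_sums_unbounded (c + sum_range x 0 m)) as [N HN].
  assert (Hsplit : sum_range x 0 (N + m) = sum_range x 0 (m + N)) by now rewrite Nat.add_comm.
  rewrite !sum_range_add in Hsplit. cbn [plus] in Hsplit.
  assert (0 <= sum_range x N m) by (apply sum_range_nonneg; intro; left; auto).
  pose proof (Hlt (m + N)%nat ltac:(lia)). unfold opens in *. rewrite Hw in *.
  pose proof (weight_nonneg m). lra.
Qed.

Lemma closed_unbounded j : exists n, (j <= closed n)%nat.
Proof.
  induction j as [|j [i Hi]]; [exists 0%nat; lia|].
  destruct (x_eventually_lt ((1/2)^j) (pow_half_pos j)) as [N HN].
  destruct (weight_ge_infinitely_often (Nat.max i N)) as [n [Hn Hw]].
  pose proof (closed_mono i n ltac:(lia)).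
  destruct (Nat.eq_dec (closed n) j) as [e|]; [|exists n; lia].
  exists (S n). rewrite closed_S; [lia|]. split; auto.
  rewrite e. left. apply HN. lia.
Qed.

Lemma weight_lt_infinitely_often m : exists n, (m <= n)%nat /\ opens n.
Proof.
  apply NNPP; intro Hnot.
  assert (Hge : forall n, (m <= n)%nat -> c <= weight n)
    by (intros n Hn; apply Rnot_lt_le; intro; apply Hnot; exists n; auto).
  assert (Hop : forall n, (m <= n)%nat -> opened n = opened m).
  { induction 1 as [|n Hn IH]; auto.
    destruct (stepP n) as [Ho _ _ _ _|_ -> _ _ _|_ _ -> _ _ _]; auto.
    specialize (Hge n Hn). unfold opens in Ho. lra. }
  destruct (x_eventually_lt ((1/2)^(opened m)) (pow_half_pos _)) as [N HN].
  set (M := Nat.max m N).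
  assert (Hcl : forall j, (closed M + j <= closed (M + j))%nat).
  { induction j as [|j IH]; [rewrite !Nat.add_0_r; auto|].
    rewrite (Nat.add_succ_r M j), closed_S; [lia|]. split; [apply Hge; lia|].
    destruct (weight_sum (M + j)) as [Hle _]. rewrite (Hop (M + j)%nat) in Hle by lia.
    pose proof (pow_half_antimono _ _ Hle). pose proof (HN (M + j)%nat ltac:(lia)). lra. }
  specialize (Hcl (S (opened m))).
  destruct (weight_sum (M + S (opened m))) as [Hle _].
  rewrite (Hop (M + S (opened m))%nat) in Hle by lia. lia.
Qed.

Lemma closer_spec k : closes (closer k) /\ closed (closer k) = k.
Proof.
  destruct (closed_unbounded (S k)) as [n Hn]. destruct (closes_exists n k Hn) as [m Hm].
  now apply (epsilon_spec (inhabits 0%nat) (fun m => closes m /\ closed m = k)); exists m.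
Qed.

Lemma closer_closed n : closes n -> closer (closed n) = n.
Proof. intro Hc. destruct (closer_spec (closed n)). now apply closes_inj. Qed.

Lemma sigma_opens n : opens n -> sigma n = closer (opened n).
Proof. intro Ho. unfold sigma. now destruct (Rlt_dec _ c). Qed.

Lemma sigma_closes n : closes n -> sigma n = opener (closed n).
Proof.
  intros [Hc Hx]. unfold sigma.
  destruct (Rlt_dec _ c); [lra|]. now destruct (Rle_dec _ _).
Qed.

Lemma sigma_fixed n : c <= weight n -> (1/2)^(closed n) < x n -> sigma n = n.
Proof.
  intros Hc Hx. unfold sigma.
  destruct (Rlt_dec _ c); [lra|]. destruct (Rle_dec _ _); [lra|auto].
Qed.

Lemma sigma_involutive n : sigma (sigma n) = n.
Proof.
  destruct (stepP n) as [Ho _ _ _ _|Hc _ _ _ _|Hc Hx _ _ _ _].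
  - destruct (closer_spec (opened n)) as [Hc e].
    rewrite (sigma_opens n Ho), (sigma_closes _ Hc), e. now apply opener_opened.
  - pose proof (closes_closed_lt n Hc) as Hlt.
    destruct (opener_spec n _ Hlt) as [Ho e].
    rewrite (sigma_closes n Hc), (sigma_opens _ Ho), e. now apply closer_closed.
  - now rewrite !(sigma_fixed n).
Qed.

Definition defect m :=
  sum_range (fun k => x (opener k) - x (closer k)) (closed m) (opened m - closed m).

Lemma defect_S n : defect (S n) = defect n + (x n - x (sigma n)).
Proof.
  destruct (weight_sum n) as [Hle _]. unfold defect.
  destruct (stepP n) as [Ho -> -> _ _|Hc -> -> _ _|Hc Hx -> -> _ _].
  - replace (S (opened n) - closed n)%nat with (S (opened n - closed n)) by lia.
    rewrite sum_range_S. replace (closed n + _)%nat with (opened n) by lia.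
    rewrite (sigma_opens n Ho), (opener_opened n Ho). ring.
  - pose proof (closes_closed_lt n Hc).
    replace (opened n - closed n)%nat with (S (opened n - S (closed n))) by lia.
    cbn [sum_range]. rewrite (sigma_closes n Hc), (closer_closed n Hc). ring.
  - rewrite (sigma_fixed n Hc Hx). ring.
Qed.

Lemma partial_sum_defect N : sum_f_R0 (fun n => x n - x (sigma n)) N = defect (S N).
Proof.
  induction N as [|N IH]; cbn [sum_f_R0]; rewrite defect_S; [|now rewrite IH].
  unfold defect; cbn. ring.
Qed.

Lemma defect_eq m : defect m =
  weight m - sum_range (fun k => x (closer k)) (closed m) (opened m - closed m).
Proof. unfold defect. now rewrite sum_range_minus, (proj2 (weight_sum m)). Qed.

Lemma pending_closers_bound m :
  0 <= sum_range (fun k => x (closer k)) (closed m) (opened m - closed m)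
     <= 2 * (1/2)^(closed m).
Proof.
  split; [apply sum_range_nonneg; intro; left; auto|].
  eapply Rle_trans; [|apply sum_range_pow_half]. apply sum_range_le. intro k.
  destruct (closer_spec k) as [[_ Hx] e]. now rewrite e in Hx.
Qed.

Lemma weight_crosses d i : opens i -> c <= weight (i + d) ->
  exists k, (i <= k)%nat /\ opens k /\ c <= weight (S k).
Proof.
  revert i; induction d as [|d IH]; intros i Ho Hge.
  - rewrite Nat.add_0_r in Hge. unfold opens in Ho. lra.
  - destruct (Rlt_dec (weight (S i)) c) as [Hlt|Hnlt].
    + rewrite <- Nat.add_succ_comm in Hge.
      destruct (IH (S i) Hlt Hge) as [k Hk]. exists k. split; [lia|tauto].
    + exists i. repeat split; auto. lra.
Qed.

(* After a late upward crossing of c, openings add at most x n and closings remove a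
   late, hence small, term. *)
Lemma weight_eventually_near e : 0 < e ->
  exists N, forall n, (N <= n)%nat -> c - e <= weight n <= c + e.
Proof.
  intro He. destruct (x_eventually_lt e He) as [M HM].
  destruct (closed_unbounded M) as [n0 Hn0].
  destruct (weight_lt_infinitely_often (Nat.max n0 M)) as [i [Hi Ho]].
  destruct (weight_ge_infinitely_often i) as [i' [Hi' Hge]].
  replace i' with (i + (i' - i))%nat in Hge by lia.
  destruct (weight_crosses _ i Ho Hge) as [k [Hk [Hok Hgek]]].
  exists (S k). intros n Hn. induction Hn as [|m Hm IH].
  - destruct (stepP k) as [_ _ _ _ Hw|[Hc _] _ _ _ _|Hc _ _ _ _ _];
      unfold opens in Hok; try lra.
    pose proof (HM k ltac:(lia)). lra.
  - destruct (stepP m) as [Ho' _ _ _ Hw|Hc _ _ _ Hw|_ _ _ _ _ Hw]; rewrite Hw.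
    + pose proof (HM m ltac:(lia)). pose proof (x_pos m). unfold opens in Ho'. lra.
    + pose proof (closes_closed_lt m Hc) as Hlt.
      rewrite (queue_opener m _ Hlt).
      pose proof (opener_ge m _ Hlt). pose proof (closed_mono n0 m ltac:(lia)).
      pose proof (HM (opener (closed m)) ltac:(lia)). pose proof (x_pos (opener (closed m))).
      destruct Hc. lra.
    + exact IH.
Qed.

Lemma sigma_partial_sums_cv : Un_cv (fun N => sum_f_R0 (fun n => x n - x (sigma n)) N) c.
Proof.
  intros eps Heps.
  destruct (weight_eventually_near (eps / 4) ltac:(lra)) as [N1 HN1].
  destruct (pow_lt_1_zero (1/2) ltac:(rewrite Rabs_right; lra) (eps / 8) ltac:(lra))
    as [k0 Hk0].
  specialize (Hk0 k0 (le_n _)). rewrite Rabs_right in Hk0 by (left; apply pow_half_pos).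
  destruct (closed_unbounded k0) as [N2 HN2].
  exists (Nat.max N1 N2). intros n Hn. unfold Rdist.
  rewrite partial_sum_defect, defect_eq.
  pose proof (HN1 (S n) ltac:(lia)). pose proof (pending_closers_bound (S n)).
  pose proof (pow_half_antimono _ _ (Nat.le_trans _ _ _ HN2 (closed_mono N2 (S n) ltac:(lia)))).
  apply Rabs_def1; lra.
Qed.

End GreedyInvolution.

Theorem mainTheorem3 (x : nat -> R)
  (hpos : forall n, 0 < x n)
  (hdiv : ~ exists l : R, Un_cv (fun N => sum_f_R0 x N) l)
  (hlim : Un_cv x 0) :
  forall c : R, 0 <= c ->
  exists s : nat -> nat, is_perm s /\
    Un_cv (fun N => sum_f_R0 (fun n => x n - x (s n)) N) c.
Proof.
  intros c Hc. destruct (Rle_lt_or_eq_dec 0 c Hc) as [Hc_pos|<-].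
  - exists (sigma x c). split.
    + apply involution_is_perm. exact (sigma_involutive x c hpos Hc_pos hlim hdiv).
    + exact (sigma_partial_sums_cv x c hpos Hc_pos hlim hdiv).
  - exists (fun n => n). split; [now apply involution_is_perm|].
    intros eps Heps. exists 0%nat. intros n _. unfold Rdist.
    replace (sum_f_R0 _ n) with 0 by (induction n as [|n IH]; cbn; [|rewrite <- IH]; ring).
    rewrite Rminus_0_r, Rabs_R0. exact Heps.
Qed.
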